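(* For every integer $T\ge 5$ and every $\sigma\in\mathfrak S_3$, the vector $\sigma c$ with $c=[1,0,0,0,0,0]$ defines a facet of $P^T$.
   Context: For an integer $T\ge 2$, let $\Omega_T$ be the set of words $w=s_1s_2\cdots s_T$ over $\{1,2,3\}$ with $s_l\neq s_{l+1}$ for $l=1,\dots,T-1$. For $w\in\Omega_T$ and an ordered pair $ij$, $i\neq j$, let $x_{ij}(w)$ be the number of indices $1\le l\le T-1$ with $s_ls_{l+1}=ij$. Vectors of $\mathbb R^6$ are indexed in the order $[x_{12},x_{13},x_{21},x_{23},x_{31},x_{32}]$. Let $a_w=[x_{12}(w),\dots,x_{32}(w)]$ and $P^T=\mathrm{conv}\{a_w:w\in\Omega_T\}$ (the convex hull of the columns of the design matrix $A^T$). $\mathfrak S_3$ acts on $\mathbb R^6$ by $(\sigma c)_{ij}=c_{\sigma(i)\sigma(j)}$. A vector $c$ defines a facet of $P^T$ if $c\cdot a_w\ge0$ for all $w\in\Omega_T$ and $\{x\in P^T: c\cdot x=0\}$ is a facet of $P^T$. *)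

From HB Require Import structures.
From mathcomp Require Import all_boot all_order all_algebra all_fingroup.
Set Implicit Arguments. Unset Strict Implicit. Unset Printing Implicit Defensive.
Import Order.TTheory GRing.Theory Num.Theory.
Local Open Scope ring_scope.

(* Letters 1,2,3 are encoded as the ordinals 0,1,2 of 'I_3.
   Coordinates of R^6 are encoded as 'I_6 in the order
   [x12, x13, x21, x23, x31, x32]. *)

Definition coord_pairs : seq (nat * nat) :=
  [:: (0,1); (0,2); (1,0); (1,2); (2,0); (2,1)]%N.

Definition pair_of (k : 'I_6) : nat * nat := nth (0,0)%N coord_pairs k.

Definition coord_of (i j : 'I_3) : 'I_6 :=
  inord (index (nat_of_ord i, nat_of_ord j) coord_pairs).

Definition is_word (T : nat) (w : T.-tuple 'I_3) : bool :=
  [forall l : 'I_T.-1, nth ord0 w l != nth ord0 w l.+1].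

Definition xcount (T : nat) (w : T.-tuple 'I_3) (k : 'I_6) : nat :=
  \sum_(l < T.-1)
     ((nat_of_ord (nth ord0 w l), nat_of_ord (nth ord0 w l.+1)) == pair_of k)%N.

Definition avec (R : realFieldType) (T : nat) (w : T.-tuple 'I_3) : 'rV[R]_6 :=
  \row_k (xcount w k)%:R.

Definition dotp (R : realFieldType) (c x : 'rV[R]_6) : R :=
  \sum_(k < 6) c 0 k * x 0 k.

(* P^T = conv { a_w : w in Omega_T } *)
Definition PT (R : realFieldType) (T : nat) (x : 'rV[R]_6) : Prop :=
  exists lam : {ffun T.-tuple 'I_3 -> R},
    [/\ forall w, 0 <= lam w,
        forall w, ~~ is_word w -> lam w = 0,
        \sum_w lam w = 1
      & x = \sum_w lam w *: avec R w].

Definition aff_indep (R : realFieldType) (s : seq 'rV[R]_6) : bool :=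
  match s with
  | [::] => true
  | p0 :: ps => \rank (\matrix_(i < size ps) (nth 0 ps i - p0)) == size ps
  end.

Definition has_dim (R : realFieldType) (S : 'rV[R]_6 -> Prop) (d : nat) : Prop :=
  (exists s : seq 'rV[R]_6,
      [/\ size s = d.+1, (forall x, x \in s -> S x) & aff_indep s]) /\
  (forall s : seq 'rV[R]_6,
      (forall x, x \in s -> S x) -> aff_indep s -> (size s <= d.+1)%N).

Definition defines_facet (R : realFieldType) (T : nat) (c : 'rV[R]_6) : Prop :=
  (forall w : T.-tuple 'I_3, is_word w -> 0 <= dotp c (avec R w)) /\
  exists d : nat,
    has_dim (@PT R T) d.+1 /\
    has_dim (fun x => @PT R T x /\ dotp c x = 0) d.

Definition sact (R : realFieldType) (s : 'S_3) (c : 'rV[R]_6) : 'rV[R]_6 :=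
  \row_k c 0 (coord_of (s (inord (pair_of k).1)) (s (inord (pair_of k).2))).

Definition c0 (R : realFieldType) : 'rV[R]_6 := \row_(k < 6) (k == 0 :> nat)%:R.

From HB Require Import structures.
From mathcomp Require Import all_boot all_order all_algebra all_fingroup.
From mathcomp Require Import zify.
Set Implicit Arguments. Unset Strict Implicit. Unset Printing Implicit Defensive.
Import Order.TTheory GRing.Theory Num.Theory.
Local Open Scope ring_scope.

(* sigma [1,0,0,0,0,0] is the unit vector e_k0 of the coordinate k0 of some
   ordered pair ab; let c be the third letter.  Every a_w lies on the
   hyperplane sum_k x_k = T - 1, and the face lies moreover on x_k0 = 0; hence dim P^T <= 5 and the face has
   dimension <= 4.  Conversely, six words made of a prefix of length four
   (from a fixed table) followed by the alternating tail acac... give six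
   affinely independent points of P^T, the first five of which never use the
   transition ab and so lie on the face.  Since the tails agree, the
   differences a_w - a_w' only depend on the prefixes, not on T, and their
   independence is certified once and for all by an explicit integer right
   inverse. *)

Definition pair_fst (k : 'I_6) : 'I_3 := inord (pair_of k).1.
Definition pair_snd (k : 'I_6) : 'I_3 := inord (pair_of k).2.

Lemma pair_fst_neq k : pair_fst k != pair_snd k.
Proof.
by case: k => [[|[|[|[|[|[|//]]]]]] ?]; rewrite /pair_fst /pair_snd -(inj_eq val_inj) /= !inordK.
Qed.

Lemma coord_ofP (u v : 'I_3) k :
  u != v -> (k == coord_of u v) = (pair_fst k == u) && (pair_snd k == v).
Proof.
rewrite /pair_fst /pair_snd /coord_of -!(inj_eq val_inj) /=.
by case: k => [[|[|[|[|[|[|//]]]]]] ?]; case: u => [[|[|[|//]]] ?];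
  case: v => [[|[|[|//]]] ?]; rewrite //= !inordK.
Qed.

Lemma sact_c0 (R : realFieldType) (s : 'S_3) :
  sact s (c0 R) = delta_mx 0 (coord_of ((s^-1)%g (pair_fst 0)) ((s^-1)%g (pair_snd 0))).
Proof.
have s_neq (u v : 'I_3) : u != v -> s u != s v by rewrite (inj_eq perm_inj).
have sV_neq (u v : 'I_3) : u != v -> (s^-1)%g u != (s^-1)%g v by rewrite (inj_eq perm_inj).
apply/matrixP => i k; rewrite !mxE ord1 eqxx /=; congr (_%:R).
have eq0E (x : 'I_6) : (x == 0 :> nat) = (0 == x) by rewrite eq_sym.
rewrite -/(pair_fst k) -/(pair_snd k) eq0E.
rewrite !coord_ofP ?s_neq ?sV_neq ?pair_fst_neq //.
by rewrite ![_ == s _]eq_sym !(canF_eq (permK s)).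
Qed.

Lemma dotp_delta (R : realFieldType) (k0 : 'I_6) (x : 'rV[R]_6) :
  dotp (delta_mx 0 k0) x = x 0 k0.
Proof.
rewrite /dotp (bigD1 k0) //= mxE !eqxx mul1r big1 ?addr0 // => k nk.
by rewrite mxE (negbTE nk) mul0r.
Qed.

Section AffineDimension.
Variable R : realFieldType.

Lemma aff_indep_rinv n (p0 : 'rV[R]_6) (F : nat -> 'rV[R]_6) (B : 'M[R]_(6, n)) :
  (\matrix_(i < n) (F i - p0)) *m B = 1%:M -> aff_indep (p0 :: mkseq F n).
Proof.
move=> rinv; rewrite /aff_indep; move: (size_mkseq F n); move: (size _) => m ->.
rewrite (_ : \matrix_(i < n) _ = \matrix_(i < n) (F i - p0)); last first.
  by apply/matrixP => i j; rewrite !mxE nth_mkseq.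
by apply/row_freeP; exists B.
Qed.

Lemma aff_indep_size_affine r (S : 'rV[R]_6 -> Prop) (V : 'M[R]_(6, r)) (u : 'rV[R]_r)
    (s : seq 'rV[R]_6) :
  (forall x, S x -> x *m V = u) -> row_full V ->
  (forall x, x \in s -> S x) -> aff_indep s -> (size s + r <= 7)%N.
Proof.
move=> SV /eqP rkV; have := rank_leq_row V; rewrite rkV => r_le6.
case: s => [|p0 ps] sS /=; first by move=> _; lia.
move/eqP=> rkM; set M := (X in \rank X) in rkM.
have MV0 : M *m V = 0.
  apply/row_matrixP => i; rewrite row_mul rowK row0 mulmxBl !SV ?subrr //.
    by apply: sS; rewrite inE eqxx.
  by apply: sS; rewrite inE mem_nth ?orbT.
by have := mxrank_mul_min M V; rewrite MV0 mxrank0 rkM rkV; lia.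
Qed.

Lemma has_dim_affine (S : 'rV[R]_6 -> Prop) d r (V : 'M[R]_(6, r)) (u : 'rV[R]_r)
    (p0 : 'rV[R]_6) (F : nat -> 'rV[R]_6) (B : 'M[R]_(6, d)) :
  (d + r = 6)%N -> (forall x, S x -> x *m V = u) -> row_full V ->
  S p0 -> (forall i, (i < d)%N -> S (F i)) ->
  (\matrix_(i < d) (F i - p0)) *m B = 1%:M -> has_dim S d.
Proof.
move=> dr SV fullV Sp0 SF rinv; split.
  exists (p0 :: mkseq F d); split; [by rewrite /= size_mkseq | | exact: aff_indep_rinv rinv].
  by move=> x; rewrite inE => /predU1P[-> // | /mapP[i]]; rewrite mem_iota => /SF ? ->.
by move=> s sS /(aff_indep_size_affine SV fullV sS); lia.
Qed.

Lemma row_full_ones : row_full (const_mx 1 : 'M[R]_(6, 1)).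
Proof.
apply/row_fullP; exists (delta_mx 0 0); rewrite -rowE row_const.
by apply/matrixP => i j; rewrite !ord1 !mxE.
Qed.

Lemma row_full_ones_delta (k0 : 'I_6) :
  row_full (row_mx (const_mx 1) (delta_mx k0 0) : 'M[R]_(6, 1 + 1)).
Proof.
pose k1 : 'I_6 := if k0 == 0 then 1 else 0.
have k1_neq : k1 != k0 by rewrite /k1; case: (k0 =P 0) => [->|/eqP]; rewrite // eq_sym.
apply/row_fullP.
exists (col_mx (delta_mx 0 k1) (delta_mx 0 k0 - delta_mx 0 k1) : 'M_(1 + 1, 6)).
rewrite mul_col_row !mulmxBl !mul_delta_mx_cond -!rowE !row_const eqxx (negbTE k1_neq).
rewrite subrr mulr0n mulr1n subr0 [RHS](scalar_mx_block 1 1).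
by congr block_mx; apply/matrixP => i j; rewrite !ord1 !mxE.
Qed.

End AffineDimension.

Lemma sum_pair_of (x y : 'I_3) : x != y ->
  (\sum_(k < 6) ((x : nat, y : nat) == pair_of k))%N = 1%N.
Proof.
rewrite -(inj_eq val_inj) !big_ord_recl big_ord0.
by case: x => [[|[|[|//]]] ?]; case: y => [[|[|[|//]]] ?].
Qed.

Lemma sum_xcount T (w : T.-tuple 'I_3) : is_word w -> (\sum_(k < 6) xcount w k)%N = T.-1.
Proof.
move=> /forallP ww; rewrite /xcount exchange_big /=.
by rewrite (eq_bigr (fun _ => 1%N)) ?sum1_card ?card_ord // => l _; apply: sum_pair_of.
Qed.

Section Polytope.
Variables (R : realFieldType) (T : nat).

Lemma avec_PT (w : T.-tuple 'I_3) : is_word w -> @PT R T (avec R w).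
Proof.
move=> ww; exists [ffun v => (v == w)%:R]; split.
- by move=> v; rewrite ffunE ler0n.
- by move=> v; rewrite ffunE; case: eqP => // ->; rewrite ww.
- rewrite (bigD1 w) //= ffunE eqxx big1 ?addr0 // => v nv.
  by rewrite ffunE (negbTE nv).
- rewrite (bigD1 w) //= ffunE eqxx scale1r big1 ?addr0 // => v nv.
  by rewrite ffunE (negbTE nv) scale0r.
Qed.

Lemma avec_mul_ones (w : T.-tuple 'I_3) :
  is_word w -> avec R w *m const_mx 1 = const_mx (T.-1)%:R :> 'M_1.
Proof.
move=> ww; apply/matrixP => i j; rewrite !mxE -(sum_xcount ww) natr_sum.
by apply: eq_bigr => k _; rewrite !mxE mulr1.
Qed.

Lemma PT_mul_ones x : @PT R T x -> x *m const_mx 1 = const_mx (T.-1)%:R :> 'M_1.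
Proof.
case=> lam [_ lam_word lam1 ->]; rewrite mulmx_suml.
rewrite (eq_bigr (fun w => lam w *: const_mx (T.-1)%:R)) => [|w _].
  by rewrite -scaler_suml lam1 scale1r.
rewrite -scalemxAl; have [/avec_mul_ones -> // | /lam_word ->] := boolP (is_word w).
by rewrite !scale0r.
Qed.

Lemma PT_face_mul (k0 : 'I_6) x : @PT R T x -> dotp (delta_mx 0 k0) x = 0 ->
  x *m (row_mx (const_mx 1) (delta_mx k0 0) : 'M_(6, 1 + 1)) = row_mx (const_mx (T.-1)%:R) 0.
Proof.
rewrite dotp_delta => Px x0; rewrite mul_mx_row PT_mul_ones // -colE.
by congr row_mx; apply/matrixP => i j; rewrite !ord1 !mxE.
Qed.

End Polytope.

(* [pair_of] on a bare [nat], so that the test words below can be evaluated. *)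
Definition pair_at (k : nat) : nat * nat := nth (0, 0)%N coord_pairs k.
Definition third_letter (k : nat) : nat := (3 - (pair_at k).1 - (pair_at k).2)%N.

Definition prefix (k j : nat) : seq nat :=
  let a := (pair_at k).1 in let b := (pair_at k).2 in let c := third_letter k in
  nth [::] [:: [:: a; c; a; c]; [:: b; c; a; c]; [:: c; b; a; c];
               [:: a; c; b; c]; [:: b; a; c; b]; [:: c; a; b; c]] j.

Definition tail_letter (k l : nat) : nat := if odd l then third_letter k else (pair_at k).1.

Definition letter (k j l : nat) : nat :=
  if (l < 4)%N then nth 0%N (prefix k j) l else tail_letter k l.

Definition step (k j l : nat) : nat * nat := (letter k j l, letter k j l.+1).

Definition step_ok (k j l : nat) : bool :=
  [&& letter k j l < 3, letter k j l != letter k j l.+1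
    & (j < 5) ==> (step k j l != pair_at k)]%N.

Lemma all_iota_lt (P : pred nat) n m : all P (iota 0 n) -> (m < n)%N -> P m.
Proof. by move=> /allP allP lt_m; apply: allP; rewrite mem_iota. Qed.

Lemma step_ok_small :
  all (fun k => all (fun j => all (step_ok k j) (iota 0 6)) (iota 0 6)) (iota 0 6).
Proof. by vm_compute. Qed.

Lemma letter_tail k j l : (4 <= l)%N -> letter k j l = tail_letter k l.
Proof. by move=> le_l; rewrite /letter ltnNge le_l. Qed.

Lemma step_ok_all k j l : (k < 6)%N -> (j < 6)%N -> step_ok k j l.
Proof.
move=> lt_k lt_j; have small m : (m < 6)%N -> step_ok k j m.
  exact: all_iota_lt (all_iota_lt (all_iota_lt step_ok_small lt_k) lt_j).
have [lt_l | le_l] := ltnP l 6; first exact: small.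
have: step_ok k j (4 + odd l) by apply: small; case: odd.
have le4 : (4 <= l)%N by apply: leq_trans le_l.
rewrite /step_ok /step !letter_tail ?leq_addr ?(leq_trans le4) //.
by rewrite /tail_letter /=; case: (odd l).
Qed.

Section TestWords.
Variables (k j : nat).
Hypotheses (lt_k : (k < 6)%N) (lt_j : (j < 6)%N).

Lemma letter_lt3 l : (letter k j l < 3)%N.
Proof. by case/and3P: (step_ok_all l lt_k lt_j). Qed.

Lemma letter_neq_next l : letter k j l != letter k j l.+1.
Proof. by case/and3P: (step_ok_all l lt_k lt_j). Qed.

Lemma step_neq_pair l : (j < 5)%N -> step k j l != pair_at k.
Proof. by case/and3P: (step_ok_all l lt_k lt_j) => _ _ /implyP; apply. Qed.

Definition word T : T.-tuple 'I_3 :=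
  Tuple (introT eqP (size_mkseq (fun l => inord (letter k j l) : 'I_3) T)).

Lemma nth_word T l : (l < T)%N -> nth ord0 (word T) l = inord (letter k j l).
Proof. exact: nth_mkseq. Qed.

Lemma word_is_word T : is_word (word T).
Proof.
apply/forallP => l; have := ltn_ord l => lt_l.
rewrite !nth_word -?(inj_eq val_inj) /= ?inordK ?letter_lt3 ?letter_neq_next //; lia.
Qed.

Lemma xcount_wordE T (k' : 'I_6) :
  xcount (word T) k' = (\sum_(0 <= l < T.-1) (step k j l == pair_at k'))%N.
Proof.
rewrite big_mkord; apply: eq_bigr => l _; have := ltn_ord l => lt_l.
by rewrite !nth_word ?inordK ?letter_lt3 //; lia.
Qed.

End TestWords.

Definition prefix_count (k j k' : nat) : nat := \sum_(0 <= l < 4) (step k j l == pair_at k').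

Definition tail_count (k k' T : nat) : nat :=
  \sum_(4 <= l < T.-1) ((tail_letter k l, tail_letter k l.+1) == pair_at k').

Lemma xcount_word_split k j T (k' : 'I_6) : (k < 6)%N -> (j < 6)%N -> (5 <= T)%N ->
  xcount (word k j T) k' = (prefix_count k j k' + tail_count k k' T)%N.
Proof.
move=> lt_k lt_j le_T; rewrite xcount_wordE // (big_cat_nat (n := 4)) //; last by lia.
congr addn; apply: eq_big_nat => l /andP[le_l _].
by rewrite /step !letter_tail // ltnW.
Qed.

Lemma xcount_word_face (k : 'I_6) j T : (j < 5)%N -> xcount (word k j T) k = 0%N.
Proof.
move=> lt_j; rewrite xcount_wordE //; last by lia.
by rewrite big1 // => l _; rewrite (negbTE (step_neq_pair _ _ l lt_j)) //; lia.
Qed.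

Definition indicator (b : bool) : int := (b : nat)%:Z.

(* Obtained by solving [D * B = 1] for the 5 x 6 matrix D of [prefix_shift]s;
   only its correctness ([dual_ok_all]) matters. *)
Definition dual_coef (k j : nat) (p : nat * nat) : int :=
  let a := (pair_at k).1 in let b := (pair_at k).2 in let c := third_letter k in
  match j with
  | 0%N => - indicator (p == (a, b)) + indicator (p == (b, a)) + indicator (p == (b, c))
         + indicator (p == (c, a))
  | 1%N => indicator (p == (b, a)) + 2 * indicator (p == (c, a)) + 2 * indicator (p == (c, b))
  | 2%N => - indicator (p == (b, a)) - indicator (p == (c, a))
  | 3%N => - indicator (p == (c, a)) - indicator (p == (c, b))
  | _ => indicator (p == (a, b))
  end.

Definition prefix_shift (k i k' : nat) : int :=
  (prefix_count k i k')%:Z - (prefix_count k 0 k')%:Z.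

Definition dual_ok (k : nat) : bool :=
  all (fun i => all (fun j =>
    \sum_(0 <= k' < 6) prefix_shift k i.+1 k' * dual_coef k j (pair_at k') == indicator (i == j))
  (iota 0 5)) (iota 0 5).

Lemma dual_ok_all : all dual_ok (iota 0 6).
Proof. rewrite /dual_ok /prefix_shift /prefix_count unlock; by vm_compute. Qed.

Lemma xcount_word_sub (R : realFieldType) (k : 'I_6) j T (k' : 'I_6) :
  (j < 6)%N -> (5 <= T)%N ->
  (xcount (word k j T) k')%:R - (xcount (word k 0 T) k')%:R = (prefix_shift k j k')%:~R :> R.
Proof.
move=> lt_j le_T; rewrite !xcount_word_split // !natrD.
by rewrite opprD addrACA subrr addr0 rmorphB /= !pmulrn.
Qed.

Lemma word_diffs_rinv (R : realFieldType) (k : 'I_6) T n : (5 <= T)%N -> (n <= 5)%N ->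
  (\matrix_(i < n) (avec R (word k i.+1 T) - avec R (word k 0 T))) *m
  (\matrix_(k' < 6, j < n) (dual_coef k j (pair_of k'))%:~R) = 1%:M.
Proof.
move=> le_T le_n; apply/matrixP => i j; rewrite !mxE.
have lt_i : (i < 5)%N by apply: leq_trans le_n.
have lt_j : (j < 5)%N by apply: leq_trans le_n.
rewrite (eq_bigr (fun k' : 'I_6 => (prefix_shift k i.+1 k' * dual_coef k j (pair_at k'))%:~R));
  last by move=> k' _; rewrite !mxE xcount_word_sub // intrM.
rewrite -rmorph_sum.
rewrite -(big_mkord xpredT (fun k' => prefix_shift k i.+1 k' * dual_coef k j (pair_at k'))).
have /eqP -> := all_iota_lt (all_iota_lt (all_iota_lt dual_ok_all (ltn_ord k)) lt_i) lt_j.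
by rewrite /indicator pmulrn.
Qed.

Theorem proposition5 (R : realFieldType) (T : nat) (s : 'S_3) :
  (5 <= T)%N -> @defines_facet R T (sact s (c0 R)).
Proof.
move=> le_T; rewrite sact_c0; set k0 := coord_of _ _.
have word_PT j : (j < 6)%N -> @PT R T (avec R (word k0 j T)).
  by move=> lt_j; apply/avec_PT/word_is_word.
have word_face j : (j < 5)%N -> dotp (delta_mx 0 k0) (avec R (word k0 j T)) = 0.
  by move=> lt_j; rewrite dotp_delta mxE xcount_word_face.
split; first by move=> w _; rewrite dotp_delta mxE ler0n.
pose F j := avec R (word k0 j.+1 T).
exists 4%N; split.
- apply: (has_dim_affine (F := F) _ (@PT_mul_ones R T) (row_full_ones R) (word_PT 0%N isT) _
    (word_diffs_rinv R k0 le_T (leqnn 5))) => // i lt_i.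
  exact: word_PT.
- apply: (has_dim_affine (F := F) _ _ (row_full_ones_delta R k0) _ _
    (word_diffs_rinv R k0 le_T (leqnSn 4))) => //.
  + by move=> x [Px x0]; exact: PT_face_mul Px x0.
  + exact: (conj (word_PT 0%N isT) (word_face 0%N isT)).
  + by move=> i lt_i; split; [apply: word_PT | apply: word_face]; lia.
Qed.
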